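(* Let $(M,I,J,K)$ be a hypercomplex manifold of complex dimension $2n$ (with respect to $I$), and let $\alpha$ be a nonnegative real $(1,1)$-form on $M$. Then \[ \big(\alpha-\alpha(\cdot J,\cdot J)\big)^{2n}\ \ge\ \alpha^{2n} \] as top-degree forms (i.e. the difference is a nonnegative multiple of the volume form for the orientation induced by $I$).
   Context: A hypercomplex manifold $(M,I,J,K)$ is a manifold with three integrable complex structures satisfying $IJK=-\mathrm{id}_{TM}$; endomorphisms act on tangent vectors from the right (written $XJ$). Types $(p,q)$ are with respect to $I$. A real $(1,1)$-form $\alpha$ is nonnegative if $\alpha(Z,\bar Z)\ge0$ in the usual sense of positivity of real $(1,1)$-forms (equivalently $-\sqrt{-1}\,\alpha(Z,\bar Z)\ge 0$ under the standard convention, i.e. $\alpha$ is a semipositive $(1,1)$-form) for all $(1,0)$-vectors $Z$. The form $\alpha(\cdot J,\cdot J)$ denotes $(X,Y)\mapsto\alpha(XJ,YJ)$. *)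

(* Pointwise (linear-algebra) model of a hypercomplex
   manifold: one tangent space R^(4n), tangent vectors are row vectors,
   endomorphisms act on the right (X J = X *m J). *)
From mathcomp Require Import all_boot all_order all_algebra.
From mathcomp Require Import perm.
Set Implicit Arguments. Unset Strict Implicit. Unset Printing Implicit Defensive.
Import Order.TTheory GRing.Theory Num.Theory.
Local Open Scope ring_scope.

Section Defs.
Variable R : realFieldType.
Variable m : nat.

Definition bil (A : 'M[R]_m) (X Y : 'rV[R]_m) : R := (X *m A *m Y^T) 0 0.

Definition hypercomplex (I J K : 'M[R]_m) : Prop :=
  [/\ I *m I = - 1%:M, J *m J = - 1%:M, K *m K = - 1%:M
    & I *m J *m K = - 1%:M].

Definition real_2form (A : 'M[R]_m) : Prop := A^T = - A.

Definition type11 (I A : 'M[R]_m) : Prop :=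
  forall X Y : 'rV[R]_m, bil A (X *m I) (Y *m I) = bil A X Y.

(* nonnegativity of a real (1,1)-form: alpha(X, XI) >= 0 for all real X,
   equivalently -sqrt(-1) alpha(Z, Zbar) >= 0 for Z = X - sqrt(-1) XI *)
Definition nonneg11 (I A : 'M[R]_m) : Prop :=
  forall X : 'rV[R]_m, 0 <= bil A X (X *m I).

Definition Jpull (J A : 'M[R]_m) : 'M[R]_m := J *m A *m J^T.

(* k-th wedge power of the 2-form A, evaluated on the ordered 2k-tuple
   (v(0,false), v(0,true), v(1,false), v(1,true), ...):
   alpha^k (v_1,...,v_2k) = 2^-k sum_sigma sgn(sigma)
                             prod_i alpha(v_sigma(2i-1), v_sigma(2i)). *)
Definition wedge_pow (A : 'M[R]_m) (k : nat)
    (v : 'I_k * bool -> 'rV[R]_m) : R :=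
  (2%:R ^- k) * \sum_(s : {perm 'I_k * bool})
     (-1) ^+ odd_perm s * \prod_(i : 'I_k) bil A (v (s (i, false))) (v (s (i, true))).

Definition cframe (I : 'M[R]_m) (k : nat) (e : 'I_k -> 'rV[R]_m)
    (t : 'I_k * bool) : 'rV[R]_m :=
  if t.2 then e t.1 *m I else e t.1.

Definition lin_indep (T : finType) (v : T -> 'rV[R]_m) : Prop :=
  forall c : T -> R, \sum_(t : T) c t *: v t = 0 -> forall t, c t = 0.

End Defs.

From HB Require Import structures.
From mathcomp Require Import all_boot all_order all_algebra.
From mathcomp Require Import perm complex ring lra.
Set Implicit Arguments. Unset Strict Implicit. Unset Printing Implicit Defensive.
Import Order.TTheory GRing.Theory Num.Theory.
Local Open Scope ring_scope.

(* Expanding (α - α(.J,.J))^(2n) multilinearly, the term α^(2n) appears once and every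
   other term is a mixed wedge product of the forms α and -α(.J,.J), both nonnegative
   (1,1)-forms since J anticommutes with I.  On the frame (e_1, e_1 I, ...) a
   nonnegative (1,1)-form is, by Gaussian elimination, a nonnegative combination of
   forms λ(.I) ∧ λ, and a wedge product of such rank-one forms is a determinant
   det [[P, Q], [-Q, P]] = |det (P + iQ)|^2 >= 0. *)

Section SignedPermSums.
Variables (R : comPzRingType) (T : finType).

Definition detf (W : T -> T -> R) : R :=
  \sum_(s : {perm T}) (-1) ^+ odd_perm s * \prod_x W x (s x).

Lemma eq_detf (W W' : T -> T -> R) : (forall x y, W x y = W' x y) -> detf W = detf W'.
Proof.
by move=> eW; apply: eq_bigr => s _; congr (_ * _); apply: eq_bigr => x _; rewrite eW.
Qed.

Lemma signed_sum_oddMl (t : {perm T}) (g : {perm T} -> R) : odd_perm t ->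
  \sum_s (-1) ^+ odd_perm s * g (t * s)%g = - \sum_s (-1) ^+ odd_perm s * g s.
Proof.
move=> odd_t; rewrite [in RHS](reindex_inj (mulgI t)) -sumrN.
by apply: eq_bigr => s _; rewrite odd_permM odd_t signr_addb mulN1r mulNr opprK.
Qed.

End SignedPermSums.

Lemma detfE (R : comPzRingType) n (M : 'M[R]_n) : \det M = detf (fun i j => M i j).
Proof. by []. Qed.

Section PermTransport.
Variables (T1 T2 : finType) (f : T1 -> T2) (g : T2 -> T1).
Hypotheses (fK : cancel f g) (gK : cancel g f).

Lemma perm_transport_inj (s : {perm T1}) : injective (fun x => f (s (g x))).
Proof. by move=> x y /= /(can_inj fK) /(@perm_inj _ s) /(can_inj gK). Qed.

Definition perm_transport (s : {perm T1}) : {perm T2} := perm (@perm_transport_inj s).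

Lemma perm_transportE s x : perm_transport s x = f (s (g x)).
Proof. by rewrite permE. Qed.

Lemma perm_transportM : {morph perm_transport : s t / (s * t)%g >-> (s * t)%g}.
Proof. by move=> s t; apply/permP => x; rewrite !permM !perm_transportE fK permM. Qed.

Lemma perm_transport1 : perm_transport 1%g = 1%g.
Proof. by apply/permP => x; rewrite perm_transportE !perm1 gK. Qed.

Lemma perm_transport_tperm a b : perm_transport (tperm a b) = tperm (f a) (f b).
Proof.
apply/permP => x; rewrite perm_transportE.
case: tpermP => [<-|<-|na nb]; rewrite ?gK ?tpermL ?tpermR //.
by rewrite tpermD // -(can_eq gK) fK eq_sym; apply/eqP.
Qed.

Lemma odd_perm_transport s : odd_perm (perm_transport s) = odd_perm s.
Proof.
case: (prod_tpermP s) => ts -> dts.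
rewrite (big_morph perm_transport perm_transportM perm_transport1).
under eq_bigr do rewrite perm_transport_tperm.
rewrite -(big_map (fun t => (f t.1, f t.2)) xpredT (fun t => tperm t.1 t.2)).
rewrite !odd_perm_prod ?size_map // all_map.
by apply: sub_all dts => -[a b]; rewrite /dpair /= (can_eq fK).
Qed.

End PermTransport.

Lemma detf_transport (R : comPzRingType) (T1 T2 : finType) (f : T1 -> T2) (g : T2 -> T1)
    (fK : cancel f g) (gK : cancel g f) (W : T2 -> T2 -> R) :
  detf W = detf (fun x y => W (f x) (f y)).
Proof.
rewrite /detf (reindex (perm_transport fK gK)); last first.
  by exists (perm_transport gK fK) => s _; apply/permP => x;
    rewrite !perm_transportE ?fK ?gK.
apply: eq_bigr => s _; rewrite odd_perm_transport; congr (_ * _).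
rewrite (reindex f); last by exists g => x _; rewrite ?fK ?gK.
by apply: eq_bigr => x _; rewrite perm_transportE fK.
Qed.

Section FrameIndex.
Variable N : nat.
Local Notation T := ('I_N * bool)%type.

Definition frame_of_ord (a : 'I_(N + N)) : T :=
  match split a with inl i => (i, false) | inr i => (i, true) end.

Definition ord_of_frame (x : T) : 'I_(N + N) :=
  unsplit (if x.2 then inr x.1 else inl x.1).

Lemma frame_of_ordK : cancel frame_of_ord ord_of_frame.
Proof.
by move=> a; rewrite /frame_of_ord /ord_of_frame; case: splitP => i /= ai; apply/val_inj.
Qed.

Lemma ord_of_frameK : cancel ord_of_frame frame_of_ord.
Proof. by move=> [i []]; rewrite /frame_of_ord /ord_of_frame unsplitK. Qed.

Lemma detf_block (R : comPzRingType) (W : T -> T -> R) :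
  detf W = \det (block_mx
    (\matrix_(i, j) W (i, false) (j, false)) (\matrix_(i, j) W (i, false) (j, true))
    (\matrix_(i, j) W (i, true) (j, false)) (\matrix_(i, j) W (i, true) (j, true))).
Proof.
rewrite (detf_transport frame_of_ordK ord_of_frameK) detfE; apply: eq_detf => a b.
rewrite /block_mx !mxE /frame_of_ord.
by case: (split a) => i; rewrite !mxE; case: (split b) => j; rewrite !mxE.
Qed.

End FrameIndex.

Section WedgeProduct.
Variables (R : numFieldType) (N : nat).
Local Notation T := ('I_N * bool)%type.
Implicit Types G : 'I_N -> T -> T -> R.

(* [wedge_prod G] is (β_0 ∧ ... ∧ β_(N-1)) (v) for a frame v and 2-forms β_i with
   [G i p q = β_i (v p) (v q)], normalised as in [wedge_pow]. *)
Definition wedge_prod G : R :=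
  (2%:R ^- N) * \sum_(s : {perm T})
     (-1) ^+ odd_perm s * \prod_(i : 'I_N) G i (s (i, false)) (s (i, true)).

Lemma eq_wedge_prod G G' :
  (forall i p q, G i p q = G' i p q) -> wedge_prod G = wedge_prod G'.
Proof.
move=> eG; congr (_ * _); apply: eq_bigr => s _; congr (_ * _).
by apply: eq_bigr => i _; rewrite eG.
Qed.

Lemma wedge_prod_sum (K : finType) (H : 'I_N -> K -> T -> T -> R) :
  wedge_prod (fun i p q => \sum_(k : K) H i k p q) =
  \sum_(f : {ffun 'I_N -> K}) wedge_prod (fun i => H i (f i)).
Proof.
rewrite /wedge_prod -mulr_sumr; congr (_ * _).
under eq_bigr do rewrite bigA_distr_bigA mulr_sumr.
by rewrite exchange_big.
Qed.

Lemma wedge_prodZ (c : 'I_N -> R) G :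
  wedge_prod (fun i p q => c i * G i p q) = (\prod_i c i) * wedge_prod G.
Proof.
rewrite /wedge_prod mulrCA; congr (_ * _); rewrite mulr_sumr; apply: eq_bigr => s _.
by rewrite big_split /= mulrCA.
Qed.

Section Decomposable.
Variable W : T -> T -> R.

Let pair_term i (s : {perm T}) := W (i, false) (s (i, false)) * W (i, true) (s (i, true)).
Let swap i : {perm T} := tperm (i, false) (i, true).

Lemma pair_term_swap i s :
  pair_term i (swap i * s)%g = W (i, true) (s (i, false)) * W (i, false) (s (i, true)).
Proof. by rewrite /pair_term !permM tpermL tpermR mulrC. Qed.

Lemma swap_fix i j c : i != j -> swap j (i, c) = (i, c).
Proof. by move=> ij; rewrite tpermD // xpair_eqE negb_and eq_sym ij. Qed.

Lemma signed_sum_swap_diff j (F : {perm T} -> R) : (forall s, F (swap j * s)%g = F s) ->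
  \sum_s (-1) ^+ odd_perm s * ((pair_term j s - pair_term j (swap j * s)%g) * F s) =
  2%:R * \sum_s (-1) ^+ odd_perm s * (pair_term j s * F s).
Proof.
move=> Fswap; under eq_bigr do rewrite mulrBl mulrBr -{2}Fswap.
rewrite sumrB (signed_sum_oddMl (fun s => pair_term j s * F s)); last first.
  by rewrite odd_tperm xpair_eqE andbF.
by rewrite opprK mulr2n mulrDl mul1r.
Qed.

Lemma signed_sum_prod_swap_diff k : (k <= N)%N ->
  \sum_(s : {perm T}) (-1) ^+ odd_perm s *
    \prod_i (pair_term i s - pair_term i (swap i * s)%g) =
  2%:R ^+ k * \sum_(s : {perm T}) (-1) ^+ odd_perm s * \prod_(i : 'I_N)
    (if (i < k)%N then pair_term i s else pair_term i s - pair_term i (swap i * s)%g).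
Proof.
elim: k => [|k IH] kN.
  by rewrite mul1r; apply: eq_bigr => s _; congr (_ * _); apply: eq_bigr.
rewrite IH ?(ltnW kN) // exprSr -mulrA; congr (_ * _).
pose j := Ordinal kN.
pose F s := \prod_(i : 'I_N | i != j)
  (if (i < k)%N then pair_term i s else pair_term i s - pair_term i (swap i * s)%g).
transitivity (\sum_s (-1) ^+ odd_perm s *
    ((pair_term j s - pair_term j (swap j * s)%g) * F s)).
  by apply: eq_bigr => s _; rewrite (bigD1 j) //= ltnn mulrA.
rewrite signed_sum_swap_diff => [|s]; last first.
  by apply: eq_bigr => i ij; rewrite /pair_term !permM ?tpermL ?tpermR !swap_fix.
congr (_ * _); apply: eq_bigr => s _; rewrite (bigD1 j) //= ltnSn; congr (_ * (_ * _)).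
by apply: eq_bigr => i; rewrite -val_eqE /= ltnS (leq_eqVlt i) => /negbTE ->.
Qed.

Lemma wedge_prod_decomposable :
  wedge_prod (fun i p q => W (i, false) p * W (i, true) q - W (i, true) p * W (i, false) q)
  = detf W.
Proof.
rewrite /wedge_prod /detf.
under eq_bigr do (under eq_bigr do rewrite -pair_term_swap).
rewrite (signed_sum_prod_swap_diff (leqnn N)) mulrA mulVf ?mul1r ?expf_neq0 ?pnatr_eq0 //.
apply: eq_bigr => s _; congr (_ * _).
rewrite (eq_bigr (fun i => \prod_(c : bool) W (i, c) (s (i, c)))).
  by rewrite pair_big /=; apply: eq_bigr => -[].
by move=> i _; rewrite ltn_ord big_bool /= mulrC.
Qed.

End Decomposable.
End WedgeProduct.

Lemma block_unitriangular_conj (K : comPzRingType) (n : nat) (i : K) (P Q : 'M[K]_n) :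
  i * i = -1 ->
  block_mx 1%:M (- i)%:M 0 1%:M *m block_mx P Q (- Q) P *m block_mx 1%:M i%:M 0 1%:M
  = block_mx (P + i *: Q) 0 (- Q) (P - i *: Q) :> 'M_(n + n).
Proof.
move=> ii; rewrite !mulmx_block !mul1mx !mul0mx !mulmx1 !mulmx0.
rewrite !mul_scalar_mx !mul_mx_scalar !addr0 !add0r !scaleNr !scalerN opprK.
have -> : i *: (P + i *: Q) + (Q - i *: P) = 0.
  by rewrite scalerDr scalerA ii scaleN1r addrC addrA subrK subrr.
by rewrite [- _ + P]addrC.
Qed.

Section BlockDeterminant.
Variable R : realFieldType.
Local Open Scope complex_scope.

(* [complex.v] makes [conjc] a ring morphism only over real closed fields. *)
Definition conjR : R[i] -> R[i] := @conjc R.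

Lemma conjR_is_zmod_morphism : zmod_morphism conjR.
Proof. by move=> [a b] [c d] /=; simpc; rewrite [d - _]addrC. Qed.

Lemma conjR_is_monoid_morphism : monoid_morphism conjR.
Proof. by split=> [|[a b] [c d]] /=; simpc. Qed.

HB.instance Definition _ :=
  GRing.isZmodMorphism.Build R[i] R[i] conjR conjR_is_zmod_morphism.
HB.instance Definition _ :=
  GRing.isMonoidMorphism.Build R[i] R[i] conjR conjR_is_monoid_morphism.

Lemma mulcJ (a b : R) : (a +i* b) * conjR (a +i* b) = (a ^+ 2 + b ^+ 2)%:C.
Proof. by simpc; rewrite [b * a]mulrC addNr !expr2. Qed.

Lemma det_block_ge0 (n : nat) (P Q : 'M[R]_n) : 0 <= \det (block_mx P Q (- Q) P).
Proof.
pose i : R[i] := 'i.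
pose Pc := map_mx (real_complex R) P; pose Qc := map_mx (real_complex R) Q.
pose Z := Pc + i *: Qc.
have detL : \det (block_mx 1%:M (- i)%:M 0 1%:M : 'M[R[i]]_(n + n)) = 1.
  by rewrite det_ublock !det1 mulr1.
have detR : \det (block_mx 1%:M i%:M 0 1%:M : 'M[R[i]]_(n + n)) = 1.
  by rewrite det_ublock !det1 mulr1.
have ZJ : Pc - i *: Qc = map_mx conjR Z.
  by apply/matrixP => x y; rewrite !mxE; simpc.
have : (\det (block_mx P Q (- Q) P))%:C = \det Z * conjR (\det Z).
  rewrite -det_map_mx map_block_mx map_mxN -/Pc -/Qc.
  have := congr1 determinant (block_unitriangular_conj Pc Qc (_ : i * i = -1)).
  rewrite !det_mulmx detL detR mul1r mulr1 => ->; last by simpc.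
  by rewrite det_lblock ZJ det_map_mx.
by case: (\det Z) => a b; rewrite mulcJ => -[->]; rewrite addr_ge0 ?sqr_ge0.
Qed.

End BlockDeterminant.

Section BilinearForms.
Variables (R : realFieldType) (m : nat).
Implicit Types (A B : 'M[R]_m) (X Y Z : 'rV[R]_m).

Lemma bilDl A X Y Z : bil A (X + Y) Z = bil A X Z + bil A Y Z.
Proof. by rewrite /bil !mulmxDl mxE. Qed.

Lemma bilZl A a X Z : bil A (a *: X) Z = a * bil A X Z.
Proof. by rewrite /bil -!scalemxAl mxE. Qed.

Lemma bilNl A X Z : bil A (- X) Z = - bil A X Z.
Proof. by rewrite -scaleN1r bilZl mulN1r. Qed.

Lemma bilDr A X Y Z : bil A Z (X + Y) = bil A Z X + bil A Z Y.
Proof. by rewrite /bil raddfD /= !mulmxDr mxE. Qed.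

Lemma bilZr A a X Z : bil A Z (a *: X) = a * bil A Z X.
Proof. by rewrite /bil linearZ /= -!scalemxAr mxE. Qed.

Lemma bilNr A X Z : bil A Z (- X) = - bil A Z X.
Proof. by rewrite -scaleN1r bilZr mulN1r. Qed.

Lemma bil_mxD A B X Y : bil (A + B) X Y = bil A X Y + bil B X Y.
Proof. by rewrite /bil mulmxDr mulmxDl mxE. Qed.

Lemma bil_mxN A X Y : bil (- A) X Y = - bil A X Y.
Proof. by rewrite /bil mulmxN mulNmx mxE. Qed.

Lemma bil_mxZ a A X Y : bil (a *: A) X Y = a * bil A X Y.
Proof. by rewrite /bil -scalemxAr -scalemxAl mxE. Qed.

Lemma bil_mx_sum (I : Type) (r : seq I) (P : pred I) (F : I -> 'M[R]_m) X Y :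
  bil (\sum_(i <- r | P i) F i) X Y = \sum_(i <- r | P i) bil (F i) X Y.
Proof.
apply: (big_morph (fun A => bil A X Y)) => [A B|]; first exact: bil_mxD.
by rewrite /bil mulmx0 mul0mx mxE.
Qed.

Lemma mx11_trmx (M : 'M[R]_1) : M 0 0 = M^T 0 0.
Proof. by rewrite mxE. Qed.

Lemma real_2formC A X Y : real_2form A -> bil A X Y = - bil A Y X.
Proof.
by move=> skA; rewrite /bil mx11_trmx !trmx_mul trmxK skA mulNmx mulmxN mxE mulmxA.
Qed.

Lemma real_2form_bilxx A X : real_2form A -> bil A X X = 0.
Proof.
by move=> /(real_2formC X X) /eqP; rewrite -addr_eq0 -mulr2n mulrn_eq0 => /eqP.
Qed.

Definition lform (l X : 'rV[R]_m) : R := (X *m l^T) 0 0.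

Lemma lformN l X : lform l (- X) = - lform l X.
Proof. by rewrite /lform mulNmx mxE. Qed.

Lemma bil_tr_mul (a b : 'rV[R]_m) X Y : bil (a^T *m b) X Y = lform a X * lform b Y.
Proof.
rewrite /bil /lform mulmxA -mulmxA [in LHS]mxE big_ord1; congr (_ * _).
by rewrite mx11_trmx trmx_mul trmxK.
Qed.

Definition radical A X := forall Y, bil A X Y = 0.

End BilinearForms.

Section PositiveForms11.
Variables (R : realFieldType) (m : nat) (I : 'M[R]_m).
Hypothesis I2 : I *m I = - 1%:M.
Implicit Types (A B : 'M[R]_m) (X Y u : 'rV[R]_m).

Lemma mulmxII X : X *m I *m I = - X.
Proof. by rewrite -mulmxA I2 mulmxN mulmx1. Qed.

Definition pos11 A := [/\ real_2form A, type11 I A & nonneg11 I A].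

Lemma radicalI A X : type11 I A -> radical A (X *m I) <-> radical A X.
Proof.
move=> t11; split=> rad Y; first by rewrite -t11 rad.
by rewrite -t11 mulmxII bilNl rad oppr0.
Qed.

Lemma pos11_swap A X Y : pos11 A -> bil A X (Y *m I) = bil A Y (X *m I).
Proof.
by case=> skA t11 _; rewrite real_2formC // -t11 mulmxII bilNl opprK.
Qed.

Lemma pos11_quadD A X Y : pos11 A ->
  bil A (X + Y) ((X + Y) *m I)
  = bil A X (X *m I) + bil A Y (Y *m I) + 2%:R * bil A X (Y *m I).
Proof.
by move=> pA; rewrite mulmxDl !(bilDl, bilDr) (pos11_swap Y X pA); ring.
Qed.

Lemma bil_quadZ A a X : bil A (a *: X) ((a *: X) *m I) = a ^+ 2 * bil A X (X *m I).
Proof. by rewrite -scalemxAl bilZl bilZr mulrA expr2. Qed.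

Lemma pos11_radical A u : pos11 A -> bil A u (u *m I) = 0 -> radical A u.
Proof.
move=> pA hu; have [skA t11 nnA] := pA.
have uI_orth X : bil A X (u *m I) = 0.
  apply/eqP/negP => /negP nz.
  pose b := - (bil A X (X *m I) + 1) / (2%:R * bil A X (u *m I)).
  have := nnA (X + b *: u).
  rewrite pos11_quadD // bil_quadZ hu mulr0 addr0 -scalemxAl bilZr.
  by rewrite mulrCA /b divfK ?mulf_neq0 ?pnatr_eq0 // opprD addrA subrr add0r ler0N1.
apply/(radicalI _ t11) => Y.
by rewrite real_2formC // uI_orth oppr0.
Qed.

Lemma pos11_cauchy_schwarz A X u : pos11 A ->
  bil A X (u *m I) ^+ 2 + bil A X u ^+ 2 <= bil A X (X *m I) * bil A u (u *m I).
Proof.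
move=> pA; have [skA t11 nnA] := pA.
set h := bil A u (u *m I); set lam := bil A X (u *m I); set mu := bil A X u.
have [h0|hn0] := eqVneq h 0.
  have /(radicalI _ t11) radA_uI := pos11_radical pA h0.
  have radA_u := pos11_radical pA h0.
  by rewrite /lam /mu h0 mulr0 real_2formC // radA_uI real_2formC // radA_u oppr0 expr0n addr0.
have h_gt0 : 0 < h by rewrite lt_def hn0 nnA.
have := nnA (h *: X + (- lam *: u + mu *: (u *m I))).
have quad_uI : bil A (u *m I) (u *m I *m I) = h by rewrite t11.
rewrite !pos11_quadD // !bil_quadZ quad_uI -!scalemxAl mulmxDl -!scalemxAl.
rewrite !(bilZl, bilZr, bilDr) !mulmxII !bilNr real_2form_bilxx // -/h -/lam -/mu.
nra.
Qed.

Definition rank1_form (l : 'rV[R]_m) : 'M[R]_m :=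
  (l *m I^T)^T *m l - l^T *m (l *m I^T).

Lemma lform_mulI l X : lform (l *m I^T) X = lform l (X *m I).
Proof. by rewrite /lform trmx_mul trmxK mulmxA. Qed.

Lemma bil_rank1_form l X Y :
  bil (rank1_form l) X Y = lform l (X *m I) * lform l Y - lform l X * lform l (Y *m I).
Proof. by rewrite bil_mxD bil_mxN !bil_tr_mul !lform_mulI. Qed.

Lemma rank1_form_2form l : real_2form (rank1_form l).
Proof. by rewrite /real_2form /rank1_form linearB /= !trmx_mul !trmxK opprB. Qed.

Lemma rank1_form_type11 l : type11 I (rank1_form l).
Proof. by move=> X Y; rewrite !bil_rank1_form !mulmxII !lformN; ring. Qed.

(* One step of Gaussian elimination: with [λ := A (., u I)] and [h := A (u, u I)],
   subtracting [h^-1 (λ(.I) ∧ λ)] puts [u] into the radical.  If [h = 0] then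
   [h^-1 = 0] and nothing is subtracted: [u] is already in the radical. *)
Definition elim11 A u : 'M[R]_m :=
  A - (bil A u (u *m I))^-1 *: rank1_form (u *m I *m A^T).

Lemma bil_elim11 A u X Y : type11 I A ->
  bil (elim11 A u) X Y = bil A X Y - (bil A u (u *m I))^-1 *
    (bil A X u * bil A Y (u *m I) - bil A X (u *m I) * bil A Y u).
Proof.
move=> t11; have lformA Z : lform (u *m I *m A^T) Z = bil A Z (u *m I).
  by rewrite /lform trmx_mul trmxK mulmxA.
by rewrite bil_mxD bil_mxN bil_mxZ bil_rank1_form !lformA !t11.
Qed.

Lemma pos11_elim11 A u : pos11 A -> pos11 (elim11 A u).
Proof.
move=> pA; have [skA t11 nnA] := pA; split.
- rewrite /real_2form linearB /= linearZ /= rank1_form_2form {1}skA.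
  by rewrite scalerN opprB opprK addrC.
- by move=> X Y; rewrite !bil_mxD !bil_mxN !bil_mxZ rank1_form_type11 t11.
move=> X; rewrite bil_elim11 // t11 -[bil A (X *m I) u]t11 mulmxII bilNl.
have := pos11_cauchy_schwarz X u pA; have := nnA u.
set h := bil A u (u *m I); have [->|hn0] := eqVneq h 0.
  by rewrite invr0 mul0r subr0.
move=> h_ge0 cs; rewrite subr_ge0 mulrC ler_pdivrMr ?lt_def ?hn0 //.
lra.
Qed.

Lemma radical_elim11 A u X : type11 I A -> radical A X -> radical (elim11 A u) X.
Proof. by move=> t11 radX Y; rewrite bil_elim11 // !radX !mul0r subrr mulr0 subr0. Qed.

Lemma elim11_radical A u : pos11 A -> radical (elim11 A u) u.
Proof.
move=> pA; have [skA t11 _] := pA.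
set h := bil A u (u *m I); have [h0|hn0] := eqVneq h 0.
  by rewrite /elim11 -/h h0 invr0 scale0r subr0; apply: pos11_radical.
move=> Y; rewrite bil_elim11 // -/h real_2form_bilxx // mul0r sub0r mulrN mulrCA.
by rewrite mulVKf // opprK [bil A u Y]real_2formC // addNr.
Qed.

Definition rank1_comb k (c : 'I_k -> R) (l : 'I_k -> 'rV[R]_m) : 'M[R]_m :=
  \sum_i c i *: rank1_form (l i).

Lemma pos11_decomp k (x : 'I_k -> 'rV[R]_m) A : pos11 A ->
  exists c : 'I_k -> R, exists l : 'I_k -> 'rV[R]_m,
    [/\ forall i, 0 <= c i, pos11 (A - rank1_comb c l)
      & forall i, radical (A - rank1_comb c l) (x i)].
Proof.
elim: k x => [|k IH] x pA.
  by exists (fun _ => 0), (fun _ => 0); rewrite /rank1_comb big_ord0 subr0; split=> // -[].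
have [c [l [c_ge0 pD radD]]] := IH (fun i => x (lift ord0 i)) pA.
set D := A - rank1_comb c l in pD radD.
set u := x ord0; set h := bil D u (u *m I).
pose c' i := if unlift ord0 i is Some j then c j else h^-1.
pose l' i := if unlift ord0 i is Some j then l j else u *m I *m D^T.
exists c', l'.
have -> : A - rank1_comb c' l' = elim11 D u.
  rewrite /rank1_comb big_ord_recl /c' /l' unlift_none.
  under eq_bigr do rewrite liftK.
  by rewrite /elim11 -/h /D /rank1_comb opprD addrA addrAC.
have [_ t11D nnD] := pD.
split.
- by move=> i; rewrite /c'; case: unlift => [j|]; rewrite ?invr_ge0 ?c_ge0 ?nnD.
- exact: pos11_elim11.
move=> i; case: (unliftP ord0 i) => [j ->|->]; last exact: elim11_radical.
exact: radical_elim11.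
Qed.
End PositiveForms11.

Section FrameWedge.
Variables (R : realFieldType) (m : nat) (I : 'M[R]_m).
Hypothesis I2 : I *m I = - 1%:M.
Variables (N : nat) (e : 'I_N -> 'rV[R]_m).
Local Notation v := (cframe I e).

Lemma wedge_prod_rank1_ge0 (l : 'I_N -> 'rV[R]_m) :
  0 <= wedge_prod (fun i p q => bil (rank1_form I (l i)) (v p) (v q)).
Proof.
pose W (x y : 'I_N * bool) := lform (l x.1) (if x.2 then v y else v y *m I).
rewrite (eq_wedge_prod (G' := fun i p q =>
  W (i, false) p * W (i, true) q - W (i, true) p * W (i, false) q)); last first.
  by move=> i p q; rewrite bil_rank1_form.
rewrite wedge_prod_decomposable detf_block.
set Q := \matrix_(i, j) W (i, false) (j, true).
have -> : \matrix_(i, j) W (i, true) (j, false) = - Q.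
  by apply/matrixP => i j; rewrite !mxE /W /cframe /= mulmxII // lformN opprK.
exact: det_block_ge0.
Qed.

Lemma pos11_frame_decomp A : pos11 I A ->
  exists c : 'I_N -> R, exists l : 'I_N -> 'rV[R]_m, (forall i, 0 <= c i) /\
    forall p q, bil A (v p) (v q) = \sum_i c i * bil (rank1_form I (l i)) (v p) (v q).
Proof.
move=> pA; have [c [l [c_ge0 [_ t11D _] radD]]] := pos11_decomp I2 e pA.
exists c, l; split=> // p q.
have radDv : radical (A - rank1_comb I c l) (v p).
  by rewrite /cframe; case: ifP => _; rewrite ?radicalI.
rewrite -[A](subrK (rank1_comb I c l)) bil_mxD radDv add0r bil_mx_sum.
by under eq_bigr do rewrite bil_mxZ.
Qed.

Lemma wedge_prod_pos11_ge0 (B : 'I_N -> 'M[R]_m) : (forall i, pos11 I (B i)) ->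
  0 <= wedge_prod (fun i p q => bil (B i) (v p) (v q)).
Proof.
move=> pB; have [c /fin_all_exists [l decB]] :=
  fin_all_exists (fun i => pos11_frame_decomp (pB i)).
rewrite (eq_wedge_prod (G' := fun i p q =>
    \sum_k c i k * bil (rank1_form I (l i k)) (v p) (v q))); last first.
  by move=> i p q; rewrite (proj2 (decB i)).
rewrite wedge_prod_sum; apply: sumr_ge0 => f _; rewrite wedge_prodZ mulr_ge0 //.
  by apply: prodr_ge0 => i _; apply: (proj1 (decB i)).
exact: wedge_prod_rank1_ge0.
Qed.

Lemma wedge_pow_leDr A B : pos11 I A -> pos11 I B ->
  wedge_pow A v <= wedge_pow (A + B) v.
Proof.
move=> pA pB.
have wedge_powE M : wedge_pow M v = wedge_prod (fun _ p q => bil M (v p) (v q)) by [].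
have sumAB : wedge_pow (A + B) v =
    wedge_prod (fun _ p q => \sum_(k : bool) bil (if k then B else A) (v p) (v q)).
  by rewrite wedge_powE; apply: eq_wedge_prod => i p q; rewrite big_bool bil_mxD addrC.
rewrite wedge_powE sumAB.
rewrite wedge_prod_sum (bigD1 [ffun=> false]) //=.
rewrite [X in _ <= X + _](eq_wedge_prod (G' := fun _ p q => bil A (v p) (v q))).
  by rewrite lerDl; apply: sumr_ge0 => f _; apply: wedge_prod_pos11_ge0 => i; case: (f i).
by move=> i p q; rewrite ffunE.
Qed.

End FrameWedge.

Section Hypercomplex.
Variables (R : realFieldType) (m : nat) (I J K : 'M[R]_m).
Hypothesis hIJK : hypercomplex I J K.

Lemma hypercomplex_anticomm : J *m I = - (I *m J).
Proof.
have [I2 J2 K2 IJK] := hIJK.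
have IJ : I *m J = K.
  apply: oppr_inj; have := congr1 (mulmx^~ K) IJK.
  by rewrite -mulmxA K2 mulmxN mulmx1 mulNmx mul1mx.
have JIJ : J *m I *m J = I.
  apply: oppr_inj; have := congr1 (mulmx I) (etrans (congr1 (fun M => M *m M) IJ) K2).
  by rewrite /= !mulmxA I2 mulmxN mulmx1 !mulNmx mul1mx.
by rewrite -{2}JIJ -mulmxA J2 mulmxN mulmx1 opprK.
Qed.

Lemma bil_Jpull A X Y : bil (Jpull J A) X Y = bil A (X *m J) (Y *m J).
Proof. by rewrite /bil /Jpull trmx_mul !mulmxA. Qed.

Lemma pos11_Jpull A : pos11 I A -> pos11 I (- Jpull J A).
Proof.
case=> skA t11 nnA.
have XIJ X : X *m I *m J = - (X *m J *m I).
  by rewrite -mulmxA -[I *m J]opprK -hypercomplex_anticomm mulmxN mulmxA.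
split.
- by rewrite /real_2form /Jpull raddfN /= !trmx_mul trmxK skA mulNmx mulmxN !mulmxA.
- by move=> X Y; rewrite !bil_mxN !bil_Jpull !XIJ bilNl bilNr opprK t11.
- by move=> X; rewrite bil_mxN bil_Jpull XIJ bilNr opprK.
Qed.

End Hypercomplex.

Theorem lemma3p1 (R : realFieldType) (n : nat) (I J K A : 'M[R]_(4 * n)) :
  hypercomplex I J K -> real_2form A -> type11 I A -> nonneg11 I A ->
  forall e : 'I_(2 * n) -> 'rV[R]_(4 * n),
    lin_indep (cframe I e) ->
    wedge_pow A (cframe I e)
      <= wedge_pow (A - Jpull J A) (cframe I e).
Proof.
(* The frame need not be linearly independent. *)
move=> hIJK skA t11 nnA e _.
have pA : pos11 I A by split.
have [I2 _ _ _] := hIJK.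
have pJ := pos11_Jpull hIJK pA.
exact: (wedge_pow_leDr I2 e pA pJ).
Qed.
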